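(* Let $R$ be a commutative Noetherian ring, $N$ an $R$-module, $M$ a primeful $R$-module having at least one prime submodule, $X=\mathrm{Spec}(M)$, $K\le M$, and $U=X\setminus V(K)$. Then for each $\gamma=(\gamma_{\mathfrak p})_{\mathfrak p\in\mathrm{Supp}(U)}\in\mathcal{A}(N,M)(U)$ there exist $r\in\mathbb{N}$, elements $s_1,\dots,s_r\in (K:M)$ and $m_1,\dots,m_r\in N$ such that $U=\bigcup_{i=1}^r X_{s_i}$ and, for each $i=1,\dots,r$ and each $P\in X_{s_i}$, $\gamma_{(P:M)}=m_i/s_i$ in $N_{(P:M)}$.
   Context: For a submodule $L$ of an $R$-module $M$, $(L:M)=\{r\in R\mid rM\subseteq L\}$. A submodule $P$ of $M$ is prime if $P\neq M$ and whenever $rm\in P$ ($r\in R$, $m\in M$) then $r\in (P:M)$ or $m\in P$. $\mathrm{Spec}(M)$ is the set of prime submodules. $M$ is primeful if $M=0$ or the map $\mathrm{Spec}(M)\to\mathrm{Spec}(R/\mathrm{Ann}(M))$, $P\mapsto (P:M)/\mathrm{Ann}(M)$, is surjective. For $L\le M$, $V(L)=\{P\in X\mid (P:M)\supseteq (L:M)\}$; these are the closed sets of the Zariski topology on $X$. For $r\in R$, $X_r=X\setminus V(rM)$. For open $U\subseteq X$, $\mathrm{Supp}(U)=\{(P:M)\mid P\in U\}$. $\mathcal{A}(N,M)(U)$ is the set of families $(\gamma_{\mathfrak p})_{\mathfrak p\in\mathrm{Supp}(U)}\in\prod_{\mathfrak p\in\mathrm{Supp}(U)}N_{\mathfrak p}$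 such that for each $Q\in U$ there exist an open neighbourhood $W\subseteq U$ of $Q$ and $s\in R$, $m\in N$ with $s\notin (P:M)$ and $\gamma_{(P:M)}=m/s\in N_{(P:M)}$ for every $P\in W$. *)

From HB Require Import structures.
From mathcomp Require Import all_boot all_algebra.
Set Implicit Arguments. Unset Strict Implicit. Unset Printing Implicit Defensive.
Import GRing.Theory.
Local Open Scope ring_scope.

Section Defs.
Variable R : comPzRingType.

Definition psub {T : Type} (A B : T -> Prop) := forall x, A x -> B x.

Definition is_ideal (I : R -> Prop) :=
  I 0 /\ (forall a b, I a -> I b -> I (a + b)) /\ (forall r a, I a -> I (r * a)).
Definition is_prime_ideal (p : R -> Prop) :=
  is_ideal p /\ ~ p 1 /\ (forall a b, p (a * b) -> p a \/ p b).

Definition noetherian_ring :=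
  forall I : nat -> R -> Prop, (forall n, is_ideal (I n)) ->
    (forall n, psub (I n) (I n.+1)) ->
    exists n, forall k, (n <= k)%N -> I k = I n.

Section Module.
Variable M : lmodType R.

Definition is_submodule (L : M -> Prop) :=
  L 0 /\ (forall x y, L x -> L y -> L (x + y)) /\ (forall r x, L x -> L (r *: x)).

Definition colon (L : M -> Prop) : R -> Prop := fun r => forall m : M, L (r *: m).

Definition Ann : R -> Prop := colon (fun m => m = 0).

Definition is_prime_submodule (P : M -> Prop) :=
  is_submodule P /\ (exists m, ~ P m) /\
  (forall r m, P (r *: m) -> colon P r \/ P m).

Definition SpecM (P : M -> Prop) := is_prime_submodule P.

(* Primeful: M = 0 or every prime ideal of R/Ann(M) (i.e. every prime ideal of
   R containing Ann(M)) is of the form (P:M)/Ann(M). *)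
Definition primeful :=
  (forall m : M, m = 0) \/
  (forall p, is_prime_ideal p -> psub Ann p ->
     exists P, SpecM P /\ colon P = p).

Definition V (L : M -> Prop) (P : M -> Prop) := SpecM P /\ psub (colon L) (colon P).

Definition rM (r : R) : M -> Prop := fun x => exists m, x = r *: m.

Definition Xr (r : R) (P : M -> Prop) := SpecM P /\ ~ V (rM r) P.

Definition zopen (U : (M -> Prop) -> Prop) :=
  exists L, is_submodule L /\ forall P, U P <-> (SpecM P /\ ~ V L P).

Definition Supp (U : (M -> Prop) -> Prop) (p : R -> Prop) :=
  exists P, U P /\ colon P = p.

End Module.

Section Loc.
Variable N : lmodType R.

(* The element m/s of the localization N_p, represented as the equivalence
   class of (m, s) under (m,s) ~ (m',s') iff t(s' m - s m') = 0 for some t \notin p. *)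
Definition locfrac (p : R -> Prop) (m : N) (s : R) : N * R -> Prop :=
  fun x => ~ p x.2 /\ exists t, ~ p t /\ t *: (s *: x.1 - x.2 *: m) = 0.

Definition is_loc_elt (p : R -> Prop) (c : N * R -> Prop) :=
  exists m s, ~ p s /\ c = locfrac p m s.

(* A(N,M)(U): families gamma indexed by p in Supp(U) (values outside Supp(U)
   are irrelevant), gamma p in N_p. *)
Definition sectionA (M : lmodType R) (U : (M -> Prop) -> Prop)
  (gamma : (R -> Prop) -> N * R -> Prop) :=
  (forall p, Supp U p -> is_loc_elt p (gamma p)) /\
  (forall Q, U Q -> exists W (s : R) (m : N),
     zopen W /\ W Q /\ psub W U /\
     forall P, W P -> ~ colon P s /\ gamma (colon P) = locfrac (colon P) m s).

End Loc.
End Defs.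

(* Each point Q of U = X \ V(K) has a neighbourhood on which gamma is m/s; multiplying
   numerator and denominator by a in (K:M) and b in (L:M), both outside (Q:M), where
   W = X \ V(L) is that neighbourhood, gives a representation m'/s' valid on all of
   X_{s'} with s' in (K:M) and Q in X_{s'}.  Since R is Noetherian, the ideal generated
   by all such denominators s' is generated by finitely many of them, s_1, ..., s_r; a
   prime (P:M) missing some s' then misses some s_i, so these X_{s_i} cover U. *)
From mathcomp Require Import all_boot all_algebra.
From Stdlib Require Import Classical FunctionalExtensionality PropExtensionality IndefiniteDescription.
Set Implicit Arguments. Unset Strict Implicit. Unset Printing Implicit Defensive.
Import GRing.Theory.
Local Open Scope ring_scope.

Section Span.
Variable R : comPzRingType.

Fixpoint span (l : seq R) (a : R) : Prop :=
  match l with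
  | [::] => a = 0
  | x :: l' => exists c b, span l' b /\ a = c * x + b
  end.

Lemma span_ideal l : is_ideal (span l).
Proof.
elim: l => [|x l [I0 [ID IM]]] /=.
  split=> //; split; first by move=> a b -> ->; rewrite addr0.
  by move=> r a ->; rewrite mulr0.
split; first by exists 0, 0; split=> //; rewrite mul0r addr0.
split.
  move=> a b [c1 [b1 [H1 ->]]] [c2 [b2 [H2 ->]]].
  exists (c1 + c2), (b1 + b2); split; first exact: ID.
  by rewrite mulrDl -!addrA; congr (_ + _); rewrite addrCA.
move=> r a [c [b [H ->]]]; exists (r * c), (r * b); split; first exact: IM.
by rewrite mulrDr mulrA.
Qed.

Lemma span_cons x l a : span l a -> span (x :: l) a.
Proof. by move=> H; exists 0, a; split=> //; rewrite mul0r add0r. Qed.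

Lemma span_cons_head x l : span (x :: l) x.
Proof.
exists 1, 0; split; first by case: (span_ideal l).
by rewrite mul1r addr0.
Qed.

Lemma span_notin_ideal (p : R -> Prop) l a : is_ideal p -> span l a -> ~ p a ->
  exists2 i, (i < size l)%N & ~ p (nth 0 l i).
Proof.
move=> [p0 [pD pM]]; elim: l a => [|x l IH] a /=; first by move=> -> /(_ p0).
move=> [c [b [Hb ->]]] Hn.
case: (classic (p x)) => Hx; last by exists 0%N.
have Hb' : ~ p b by move=> pb; apply: Hn; apply: pD => //; exact: pM.
by case: (IH b Hb Hb') => i Hi Hpi; exists i.+1.
Qed.

(* If no finite family in S spanned g(S), choosing at each step an element outside
   the current span would give a strictly increasing chain of ideals. *)
Lemma noetherian_finite_span (T : Type) (t0 : T) (g : T -> R) (S : T -> Prop) :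
  noetherian_ring R ->
  exists l : seq T, (forall i, (i < size l)%N -> S (nth t0 l i)) /\
    (forall x, S x -> span (map g l) (g x)).
Proof.
move=> noethR; apply: NNPP => no_basis.
pose inS l := forall i, (i < size l)%N -> S (nth t0 l i).
have next_ex l : exists x : T, inS l -> S x /\ ~ span (map g l) (g x).
  case: (classic (inS l)) => Hl; last by exists t0.
  apply: NNPP => Hc; apply: no_basis; exists l; split=> // x Sx.
  by apply: NNPP => Hs; apply: Hc; exists x.
pose next l := proj1_sig (constructive_indefinite_description _ (next_ex l)).
have nextP l : inS l -> S (next l) /\ ~ span (map g l) (g (next l)).
  exact: (proj2_sig (constructive_indefinite_description _ (next_ex l))).
pose fix chain n := if n is n'.+1 then next (chain n') :: chain n' else [::].
have chain_inS n : inS (chain n).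
  elim: n => [|n IH] //= [|i] /=; first by move=> _; case: (nextP _ IH).
  exact: IH.
have [n stable] := noethR (fun n => span (map g (chain n))) (fun n => span_ideal _)
   (fun n a => @span_cons (g (next (chain n))) _ a).
have /= E := stable n.+1 (leqnSn n).
case: (nextP _ (chain_inS n)) => _; apply.
by rewrite -E; apply: span_cons_head.
Qed.

End Span.

Section Colon.
Variable R : comPzRingType.
Variables N M : lmodType R.

Lemma colon_ideal (L : M -> Prop) : is_submodule L -> is_ideal (colon L).
Proof.
move=> [L0 [LD LZ]]; split; first by move=> m; rewrite scale0r.
split; first by move=> a b Ha Hb m; rewrite scalerDl; apply: LD.
by move=> r a Ha m; rewrite -scalerA; apply: LZ.
Qed.

Lemma colon_prime (P : M -> Prop) a b : SpecM P ->
  colon P (a * b) -> colon P a \/ colon P b.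
Proof.
move=> [_ [_ HP]] Hab.
case: (classic (colon P b)) => Hb; [by right | left].
move=> m; have : P (b *: (a *: m)) by rewrite scalerA mulrC.
by case/HP.
Qed.

Lemma notV_colon (L P : M -> Prop) : SpecM P ->
  ~ V L P <-> exists2 b, colon L b & ~ colon P b.
Proof.
move=> SP; split=> [nV | [b Lb Pb] [_ /(_ b Lb)] //].
apply: NNPP => H; apply: nV; split=> // b Lb; apply: NNPP => Pb.
by apply: H; exists b.
Qed.

Lemma Xr_colon r (P : M -> Prop) : Xr r P <-> SpecM P /\ ~ colon P r.
Proof.
split.
  move=> [SP HV]; split=> // Hr; apply: HV; split=> // c Hc m.
  by have [m' ->] := Hc m; apply: Hr.
move=> [SP Hr]; split=> // [[_ H]]; apply: Hr; apply: H.
by move=> m; exists m.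
Qed.

Lemma locfrac_scale (P : M -> Prop) (m : N) s e : SpecM P -> ~ colon P e ->
  locfrac (colon P) (e *: m) (e * s) = locfrac (colon P) m s.
Proof.
move=> SP He; apply: functional_extensionality => x.
have key : (e * s) *: x.1 - x.2 *: (e *: m) = e *: (s *: x.1 - x.2 *: m).
  by rewrite scalerBr !scalerA [x.2 * e]mulrC.
apply: propositional_extensionality; rewrite /locfrac key; split.
  move=> [H1 [t [Ht E]]]; split=> //; exists (t * e); split; last by rewrite -scalerA.
  by case/(colon_prime SP).
move=> [H1 [t [Ht E]]]; split=> //; exists t; split=> //.
by rewrite scalerA mulrC -scalerA E scaler0.
Qed.

End Colon.

Section Sections.
Variable R : comPzRingType.
Variables N M : lmodType R.
Variable K : M -> Prop.
Variable gamma : (R -> Prop) -> N * R -> Prop.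

Definition global_frac (x : R * N) :=
  colon K x.1 /\
  forall P : M -> Prop, Xr x.1 P -> gamma (colon P) = locfrac (colon P) x.2 x.1.

Lemma section_global_frac_at (Q : M -> Prop) :
  is_submodule K -> sectionA (fun P : M -> Prop => SpecM P /\ ~ V K P) gamma ->
  SpecM Q -> ~ V K Q -> exists2 x, global_frac x & ~ colon Q x.1.
Proof.
move=> HK [_ Hsec] SQ nVK.
have [W [s [m [[L [HL defW]] [WQ [_ HW]]]]]] := Hsec Q (conj SQ nVK).
have [_ /(notV_colon _ SQ) [b Lb Qb]] := proj1 (defW Q) WQ.
have [a Ka Qa] := proj1 (notV_colon K SQ) nVK.
have [_ [_ IKmul]] := colon_ideal HK.
have Qs := (HW Q WQ).1.
exists ((a * b) * s, (a * b) *: m); last first.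
  by move=> /= /(colon_prime SQ) [/(colon_prime SQ) [] |].
split; first by rewrite /= -mulrA mulrC; apply: IKmul.
move=> P /= /Xr_colon [SP nabs].
have [_ [_ IPmul]] := colon_ideal SP.1.
have nab : ~ colon P (a * b) by move=> H; apply: nabs; rewrite mulrC; apply: IPmul.
have nb : ~ colon P b by move=> H; apply: nab; apply: IPmul.
have WP : W P by apply/defW; split=> //; apply/notV_colon => //; exists b.
by rewrite (proj2 (HW P WP)) (locfrac_scale _ _ SP nab).
Qed.

End Sections.

Theorem lemma3p5 (R : comPzRingType) (N M : lmodType R)
  (K : M -> Prop) (gamma : (R -> Prop) -> N * R -> Prop) :
  noetherian_ring R ->
  primeful M ->
  (exists P : M -> Prop, SpecM P) ->
  is_submodule K ->
  sectionA (fun P : M -> Prop => SpecM P /\ ~ V K P) gamma ->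
  exists (r : nat) (s : nat -> R) (m : nat -> N),
    (forall i, (i < r)%N -> colon K (s i)) /\
    (forall P : M -> Prop, (SpecM P /\ ~ V K P) <-> exists2 i, (i < r)%N & Xr (s i) P) /\
    (forall (i : nat) (P : M -> Prop), (i < r)%N -> Xr (s i) P ->
       gamma (colon P) = locfrac (colon P) (m i) (s i)).
Proof.
move=> noethR _ _ HK Hsec.
have [l [l_global span_l]] :=
  noetherian_finite_span (0, 0) fst (global_frac K gamma) noethR.
exists (size l), (fun i => (nth (0, 0) l i).1), (fun i => (nth (0, 0) l i).2).
split; first by move=> i /l_global [].
split; last by move=> i P /l_global [_ H] /H.
move=> P; split.
  move=> [SP nVK]; have [x Gx Px] := section_global_frac_at HK Hsec SP nVK.
  have [i] := span_notin_ideal (colon_ideal SP.1) (span_l x Gx) Px.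
  rewrite size_map => Hi; rewrite (nth_map (0, 0)) // => Pi.
  by exists i => //; apply/Xr_colon.
move=> [i Hi /Xr_colon [SP Pi]]; split=> //; apply/notV_colon => //.
by exists (nth (0, 0) l i).1 => //; case: (l_global i Hi).
Qed.
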